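(* Suppose $r>2$, $0<\beta<1$ and $r^2<\frac{(1+\beta)^2}{\beta}$. Then $$\frac{1}{r^{1+\beta}}\frac{(1+\beta)^{1+\beta}}{\beta^\beta}<\left(\frac2r\right)^{1+\beta}\left(\frac4{r^2}\right)^{-\beta}\left(\sqrt{1-\frac4{r^2}}+1\right)^{\beta-1}=\left(\frac r2-\sqrt{\frac{r^2}{4}-1}\right)^{1-\beta}.$$ *)

From Stdlib Require Import Reals.

(** Let [x = r/2 - sqrt (r^2/4 - 1)] be the smaller root of [x^2 - r x + 1],
    so that [0 < x < 1] and [r = x + 1/x].  In terms of [x] the right-hand side
    collapses to [x^(1-beta)], and the hypothesis on [r], read through the
    function [t |-> (1+t)^2/t] that decreases on [(0,1]], says [beta < x^2].
    After taking logarithms the inequality becomes [g beta < g (x^2)] for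
    [g z = (1+beta) ln (1+z) - beta ln z], and [g] increases on [[beta, oo)]
    since [g' z = (z - beta) / (z (1+z))]. *)

From Stdlib Require Import Reals Lra Psatz.
From Coquelicot Require Import Coquelicot.
Open Scope R_scope.

Lemma ln_balance_increasing (b z y : R) : 0 < b -> b <= z -> z < y ->
  (1 + b) * ln (1 + z) - b * ln z < (1 + b) * ln (1 + y) - b * ln y.
Proof.
  intros hb hbz hzy.
  destruct (MVT_cor2 (fun t => (1 + b) * ln (1 + t) - b * ln t)
             (fun t => (1 + b) / (1 + t) - b / t) z y hzy) as [c [Hmvt Hc]].
  { intros t Ht. apply is_derive_Reals. auto_derive; [lra | field; lra]. }
  assert (Hderiv : (1 + b) / (1 + c) - b / c = (c - b) / (c * (1 + c))) by (field; lra).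
  assert (0 < (c - b) / (c * (1 + c))) by (apply Rdiv_lt_0_compat; nra).
  rewrite Hderiv in Hmvt. nra.
Qed.

Lemma lt_of_sqr_succ_div_lt (b y : R) : 0 < b -> 0 < y -> b * y < 1 ->
  (1 + y) ^ 2 / y < (1 + b) ^ 2 / b -> b < y.
Proof.
  intros hb hy hby hlt.
  (* [(1+y)^2 b - (1+b)^2 y = (b - y) (1 - b y)] *)
  assert (hprod : (b - y) * (1 - b * y) < 0).
  { apply (Rmult_lt_compat_r (b * y)) in hlt; [|nra].
    replace ((1 + y) ^ 2 / y * (b * y)) with ((1 + y) ^ 2 * b) in hlt by (field; lra).
    replace ((1 + b) ^ 2 / b * (b * y)) with ((1 + b) ^ 2 * y) in hlt by (field; lra).
    nra. }
  nra.
Qed.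

Lemma Rpower_quotient_form (a c b : R) : 0 < a -> 0 < c ->
  Rpower a (1 + b) * Rpower (a * a) (- b) * Rpower c (b - 1) = Rpower (a / c) (1 - b).
Proof.
  intros ha hc. unfold Rpower, Rdiv.
  rewrite <- !exp_plus, ln_mult, ln_mult, ln_Rinv by (auto using Rinv_0_lt_compat).
  f_equal. ring.
Qed.

Lemma Rpower_bound_add_inv (x b : R) : 0 < x -> 0 < b -> b < x ^ 2 ->
  / Rpower (x + / x) (1 + b) * (Rpower (1 + b) (1 + b) / Rpower b b)
    < Rpower x (1 - b).
Proof.
  intros hx hb hbx.
  assert (hx2 : 0 < x ^ 2) by nra.
  assert (hln_r : ln (x + / x) = ln (1 + x ^ 2) - ln x).
  { replace (x + / x) with ((1 + x ^ 2) / x) by (field; lra). apply ln_div; lra. }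
  assert (hln_x2 : ln (x ^ 2) = 2 * ln x) by (apply ln_pow; lra).
  pose proof (ln_balance_increasing b b (x ^ 2) hb (Rle_refl b) hbx) as Hg.
  unfold Rpower, Rdiv.
  rewrite <- !exp_Ropp, <- !exp_plus. apply exp_increasing.
  rewrite hln_r. rewrite hln_x2 in Hg. lra.
Qed.

Definition small_root (r : R) : R := r / 2 - sqrt (r ^ 2 / 4 - 1).

Section SmallRoot.

Variable r : R.
Hypothesis hr : 2 < r.

Let q := sqrt (r ^ 2 / 4 - 1).

Let q_nonneg : 0 <= q.
Proof. apply sqrt_pos. Qed.

Let q_sqr : q * q = r ^ 2 / 4 - 1.
Proof. apply sqrt_sqrt. nra. Qed.

Lemma small_root_mul_large_root : small_root r * (r / 2 + q) = 1.
Proof. unfold small_root. fold q. nra. Qed.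

Lemma small_root_pos : 0 < small_root r.
Proof. pose proof small_root_mul_large_root. nra. Qed.

Lemma small_root_lt1 : small_root r < 1.
Proof. pose proof small_root_mul_large_root. nra. Qed.

Lemma small_root_add_inv : small_root r + / small_root r = r.
Proof.
  pose proof small_root_mul_large_root as hprod. pose proof small_root_pos.
  unfold small_root in *. fold q in hprod |- *.
  field_simplify_eq; nra.
Qed.

Lemma small_root_eq_div : 2 / r / (sqrt (1 - 4 / r ^ 2) + 1) = small_root r.
Proof.
  assert (hs : sqrt (1 - 4 / r ^ 2) = 2 * q / r).
  { replace (1 - 4 / r ^ 2) with ((2 * q / r) ^ 2) by (field_simplify_eq; nra).
    apply sqrt_pow2. apply Rmult_le_pos; [lra | left; apply Rinv_0_lt_compat; lra]. }
  pose proof small_root_mul_large_root.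
  rewrite hs. field_simplify_eq; [nra | nra].
Qed.

End SmallRoot.

Theorem lemma3 (r beta : R)
  (hr : 2 < r) (hb0 : 0 < beta) (hb1 : beta < 1)
  (hrb : r ^ 2 < (1 + beta) ^ 2 / beta) :
  / Rpower r (1 + beta) * (Rpower (1 + beta) (1 + beta) / Rpower beta beta)
    < Rpower (2 / r) (1 + beta) * Rpower (4 / r ^ 2) (- beta)
      * Rpower (sqrt (1 - 4 / r ^ 2) + 1) (beta - 1)
  /\
  Rpower (2 / r) (1 + beta) * Rpower (4 / r ^ 2) (- beta)
      * Rpower (sqrt (1 - 4 / r ^ 2) + 1) (beta - 1)
    = Rpower (r / 2 - sqrt (r ^ 2 / 4 - 1)) (1 - beta).
Proof.
  fold (small_root r).
  pose proof (small_root_pos r hr) as hx0.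
  pose proof (small_root_lt1 r hr) as hx1.
  pose proof (small_root_add_inv r hr) as hrx.
  set (x := small_root r) in *.
  assert (Heq : Rpower (2 / r) (1 + beta) * Rpower (4 / r ^ 2) (- beta)
      * Rpower (sqrt (1 - 4 / r ^ 2) + 1) (beta - 1) = Rpower x (1 - beta)).
  { pose proof (small_root_eq_div r hr) as hdiv.
    pose proof (sqrt_pos (1 - 4 / r ^ 2)).
    set (s := sqrt (1 - 4 / r ^ 2)) in *.
    replace (4 / r ^ 2) with (2 / r * (2 / r)) by (field; lra).
    rewrite Rpower_quotient_form, hdiv; [reflexivity | | lra].
    apply Rdiv_lt_0_compat; lra. }
  rewrite Heq. split; [|reflexivity].
  assert (hbx : beta < x ^ 2).
  { apply lt_of_sqr_succ_div_lt; [lra | nra | nra |].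
    replace ((1 + x ^ 2) ^ 2 / x ^ 2) with (r ^ 2) by (rewrite <- hrx; field; lra).
    exact hrb. }
  rewrite <- hrx at 1.
  exact (Rpower_bound_add_inv x beta hx0 hb0 hbx).
Qed.
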